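(* Let $n$ be a nonnegative integer and let \[ T_n(a,b,c)=(1+a-c)_n(c)_n\,{}_4F_3\!\left(\left.{-n,\frac{a}{2},\frac{a+1}{2},b \atop a,1+a-c,c}\right|4\right). \] Define \[ U_n(x,y,z)=T_n\!\left(x-y-z,\ \frac{1+3x-y-z-2n}{2},\ \frac{1+x+y-3z}{2}\right). \] Then $U_n$ is a symmetric function of $x,y,z$, i.e. it is invariant under all six permutations of $x,y,z$: \[ U_n(x,y,z)=U_n(x,z,y)=U_n(y,x,z)=U_n(y,z,x)=U_n(z,x,y)=U_n(z,y,x). \] Moreover, these six invariances $U_n(x,y,z)=U_n(x,y,z)$, $U_n(x,y,z)=U_n(x,z,y)$, $U_n(x,y,z)=U_n(y,x,z)$, $U_n(x,y,z)=U_n(y,z,x)$, $U_n(x,y,z)=U_n(z,x,y)$, $U_n(x,y,z)=U_n(z,y,x)$ correspond, respectively, to the following six invariances of $T_n$: \begin{align*} &T_n(a,b,c)=T_n(a,b,c),\\ &T_n(a,b,c)=T_n(a,b,1+a-c),\\ &T_n(a,b,c)=T_n(c-b-n,c-a-n,c),\\ &T_n(a,b,c)=T_n(c-b-n,c-a-n,1-b-n),\\ &T_n(a,b,c)=T_n(1+a-b-c-n,1-c-n,1+a-c),\\ &T_n(a,b,c)=T_n(1+a-b-c-n,1-c-n,1-b-n). \end{align*}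
   Context: Here $(a)_n=a(a+1)\cdots(a+n-1)$ for $n>0$ and $(a)_0=1$ is the rising factorial, and ${}_{p}F_q\!\left(\left.{a_1,\ldots,a_p \atop b_1,\ldots,b_q}\right|z\right)=\sum_{k\ge 0}\frac{(a_1)_k\cdots(a_p)_k}{k!(b_1)_k\cdots(b_q)_k}z^k$ is the generalized hypergeometric series; the ${}_4F_3(4)$ series above terminates since one numerator parameter is $-n$. Denominator parameters are assumed not to be nonpositive integers. The six invariances of $T_n$ listed form a group isomorphic to $S_3$, generated by the trivial invariance $T_n(a,b,c)=T_n(a,b,1+a-c)$ and the nontrivial one $T_n(a,b,c)=T_n(c-b-n,c-a-n,c)$. *)

(* Parameters live in an arbitrary numFieldType R
   (characteristic-0 field: covers the reals and the complex numbers). *)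
From HB Require Import structures.
From mathcomp Require Import all_boot all_order all_algebra.
Set Implicit Arguments. Unset Strict Implicit. Unset Printing Implicit Defensive.
Import Order.TTheory GRing.Theory Num.Theory.
Local Open Scope ring_scope.

Definition poch (R : numFieldType) (a : R) (k : nat) : R :=
  \prod_(i < k) (a + i%:R).

Definition hyp_term (R : numFieldType) (as_ bs : seq R) (z : R) (k : nat) : R :=
  (\prod_(a <- as_) poch a k) / (k`!%:R * \prod_(b <- bs) poch b k) * z ^+ k.

(* terminating pFq with a numerator parameter -n: all terms with k > n
   vanish (since (-n)_k = 0), so the series is the finite sum over k <= n *)
Definition hypF_term (R : numFieldType) (n : nat) (as_ bs : seq R) (z : R) : R :=
  \sum_(k < n.+1) hyp_term as_ bs z k.

Definition T (R : numFieldType) (n : nat) (a b c : R) : R :=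
  poch (1 + a - c) n * poch c n *
  hypF_term n [:: - n%:R; a / 2; (a + 1) / 2; b] [:: a; 1 + a - c; c] 4.

Definition Uparams (R : numFieldType) (n : nat) (x y z : R) : R * R * R :=
  (x - y - z, (1 + 3 * x - y - z - 2 * n%:R) / 2, (1 + x + y - 3 * z) / 2).

Definition Tt (R : numFieldType) (n : nat) (p : R * R * R) : R :=
  T n p.1.1 p.1.2 p.2.

Definition U (R : numFieldType) (n : nat) (x y z : R) : R :=
  Tt n (Uparams n x y z).

Definition not_npint (R : numFieldType) (r : R) : Prop :=
  forall m : nat, r <> - m%:R.

Definition T_admissible (R : numFieldType) (p : R * R * R) : Prop :=
  let: (a, b, c) := p in
  [/\ not_npint a, not_npint (1 + a - c) & not_npint c].

Definition U_admissible (R : numFieldType) (n : nat) (x y z : R) : Prop :=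
  T_admissible (Uparams n x y z).

Definition phi1 (R : numFieldType) (n : nat) (p : R * R * R) : R * R * R :=
  let: (a, b, c) := p in (a, b, c).
Definition phi2 (R : numFieldType) (n : nat) (p : R * R * R) : R * R * R :=
  let: (a, b, c) := p in (a, b, 1 + a - c).
Definition phi3 (R : numFieldType) (n : nat) (p : R * R * R) : R * R * R :=
  let: (a, b, c) := p in (c - b - n%:R, c - a - n%:R, c).
Definition phi4 (R : numFieldType) (n : nat) (p : R * R * R) : R * R * R :=
  let: (a, b, c) := p in (c - b - n%:R, c - a - n%:R, 1 - b - n%:R).
Definition phi5 (R : numFieldType) (n : nat) (p : R * R * R) : R * R * R :=
  let: (a, b, c) := p in (1 + a - b - c - n%:R, 1 - c - n%:R, 1 + a - c).
Definition phi6 (R : numFieldType) (n : nat) (p : R * R * R) : R * R * R :=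
  let: (a, b, c) := p in (1 + a - b - c - n%:R, 1 - c - n%:R, 1 - b - n%:R).

From HB Require Import structures.
From mathcomp Require Import all_boot all_order all_algebra.
From mathcomp Require Import ring zify.
Set Implicit Arguments. Unset Strict Implicit. Unset Printing Implicit Defensive.
Import Order.TTheory GRing.Theory Num.Theory.
Local Open Scope ring_scope.

(* Put d = 1 + a - c and e = 1 - b - n.  Gauss duplication for (a/2)_k ((a+1)/2)_k 4^k,
   reflection for (-n)_k and (b)_k, and Chu-Vandermonde for (a+k)_k = (c+d-1+k)_k turn
   T_n(a,b,c) into n! [t^n] E_c(t) E_d(t) E_e(t), where E_x(t) = sum_(i<=n) (x+i)_(n-i) t^i / i!.
   This is symmetric in (c,d,e).  For (a,b,c) = Uparams n x y z one finds
   (c,d,e) = (w(x,y,z), w(x,z,y), w(y,z,x)) with w(p,q,r) = (1+p+q-3r)/2 symmetric in p, q,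
   so permuting x, y, z permutes c, d, e. *)

Section Pochhammer.
Variable R : numFieldType.
Implicit Types x y : R.

Lemma fact_neq0 m : m`!%:R != 0 :> R.
Proof. by rewrite pnatr_eq0 -lt0n fact_gt0. Qed.

Lemma poch0 x : poch x 0 = 1.
Proof. by rewrite /poch big_ord0. Qed.

Lemma pochS x k : poch x k.+1 = poch x k * (x + k%:R).
Proof. by rewrite /poch big_ord_recr. Qed.

Lemma pochSr x k : poch x k.+1 = x * poch (x + 1) k.
Proof.
rewrite /poch big_ord_recl addr0; congr (_ * _).
by apply: eq_bigr => i _; rewrite lift0 -addn1 natrD addrAC addrA.
Qed.

Lemma pochD x k m : poch x (k + m) = poch x k * poch (x + k%:R) m.
Proof.
rewrite /poch big_split_ord /=; congr (_ * _).
by apply: eq_bigr => i _; rewrite natrD addrA.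
Qed.

Lemma poch_neq0 x k : not_npint x -> poch x k != 0.
Proof.
move=> hx; apply/prodf_neq0 => i _; apply/eqP => e.
by apply: (hx i); rewrite -[x](addrK i%:R) e add0r.
Qed.

Lemma poch_reflect x k : poch x k = (-1) ^+ k * poch (1 - x - k%:R) k.
Proof.
elim: k => [|k IH]; first by rewrite !poch0 mulr1.
rewrite pochS IH pochSr exprS -addn1 natrD.
have -> : 1 - x - (k%:R + 1) + 1 = 1 - x - k%:R by ring.
ring.
Qed.

Lemma poch_oppn n k : poch (- n%:R : R) k = (-1) ^+ k * (n ^_ k)%:R.
Proof.
elim: k => [|k IH]; first by rewrite poch0 expr0 mul1r.
rewrite pochS IH ffactnSr natrM exprS.
have [kn | nk] := leqP k n; first by rewrite natrB //; ring.
by rewrite ffact_small // !(mulr0, mul0r).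
Qed.

Lemma poch_duplication x k :
  poch (x / 2) k * poch ((x + 1) / 2) k * 4 ^+ k = poch x (k + k).
Proof.
elim: k => [|k IH]; first by rewrite !poch0 expr0 !mul1r.
rewrite addSn addnS !pochS -IH exprS !natrD.
have two_neq0 : (2 : R) != 0 by rewrite pnatr_eq0.
by field.
Qed.

Lemma poch_vandermonde x y k :
  poch (x + y) k = \sum_(i < k.+1) 'C(k, i)%:R * poch x i * poch y (k - i).
Proof.
elim: k => [|k IH].
  by rewrite big_ord_recl big_ord0 !poch0 bin0 mul1r mulr1 addr0.
have split_factor : \sum_(i < k.+1) 'C(k, i)%:R * poch x i * poch y (k - i) * (x + y + k%:R)
   = \sum_(i < k.+1) 'C(k, i)%:R * poch x i.+1 * poch y (k - i)
   + \sum_(i < k.+1) 'C(k, i)%:R * poch x i * poch y (k - i).+1.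
  rewrite -big_split /=; apply: eq_bigr => i _.
  have hi : (i <= k)%N by rewrite -ltnS.
  rewrite !pochS natrB //; ring.
rewrite pochS IH mulr_suml split_factor [RHS]big_ord_recl /= bin0 subn0.
under [in RHS]eq_bigr => i _ do rewrite binS natrD subSS mulrDl mulrDl.
rewrite big_split /= [LHS]addrC addrA; congr (_ + _).
rewrite [LHS]big_ord_recl bin0 subn0 /=; congr (_ + _).
rewrite [RHS]big_ord_recr /= bin_small // mul0r mul0r addr0.
by apply: eq_bigr => i _; rewrite subnSK.
Qed.

Lemma poch_vandermonde_rev x y k :
  poch (x + y - 1 + k%:R) k =
  \sum_(i < k.+1) 'C(k, i)%:R * poch (x + i%:R) (k - i) * poch (y + (k - i)%:R) i.
Proof.
rewrite poch_reflect.
have -> : 1 - (x + y - 1 + k%:R) - k%:R = (1 - y - k%:R) + (1 - x - k%:R) by ring.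
rewrite poch_vandermonde mulr_sumr; apply: eq_bigr => i _.
have hi : (i <= k)%N by rewrite -ltnS.
rewrite [poch (x + i%:R) _]poch_reflect [poch (y + _) i]poch_reflect.
have -> : 1 - (x + i%:R) - (k - i)%:R = 1 - x - k%:R by rewrite natrB //; ring.
have -> : 1 - (y + (k - i)%:R) - i%:R = 1 - y - k%:R by rewrite natrB //; ring.
have -> : (-1) ^+ k = (-1) ^+ (k - i) * (-1) ^+ i :> R by rewrite -exprD subnK.
ring.
Qed.

End Pochhammer.

Section SymmetricForm.
Variable R : numFieldType.

Lemma T_term_numer n k (a b : R) : (k <= n)%N ->
  \prod_(x <- [:: - n%:R; a / 2; (a + 1) / 2; b]) poch x k * 4 ^+ k =
  'C(n, k)%:R * k`!%:R * poch (1 - b - n%:R + (n - k)%:R) k * poch a (k + k).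
Proof.
move=> hk; rewrite !big_cons big_nil mulr1 poch_oppn -bin_ffact natrM -poch_duplication.
have -> : 1 - b - n%:R + (n - k)%:R = 1 - b - k%:R by rewrite natrB //; ring.
rewrite [poch (1 - b - _) k]poch_reflect.
have -> : 1 - (1 - b - k%:R) - k%:R = b by ring.
ring.
Qed.

Definition Tsum n (c d e : R) : R :=
  \sum_(k < n.+1) 'C(n, k)%:R * poch (c + d - 1 + k%:R) k * poch (e + (n - k)%:R) k
     * poch (d + k%:R) (n - k) * poch (c + k%:R) (n - k).

Lemma T_Tsum n (a b c : R) :
  not_npint a -> not_npint (1 + a - c) -> not_npint c ->
  T n a b c = Tsum n c (1 + a - c) (1 - b - n%:R).
Proof.
move=> ha hd hc; rewrite /T /hypF_term /Tsum mulr_sumr; apply: eq_bigr => k _.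
have hk : (k <= n)%N by rewrite -ltnS.
rewrite /hyp_term [_ / _ * _]mulrAC T_term_numer // !big_cons big_nil mulr1.
have -> : c + (1 + a - c) - 1 + k%:R = a + k%:R by ring.
have split_n x : poch x n = poch x k * poch (x + k%:R) (n - k).
  by rewrite -pochD subnKC.
rewrite !split_n pochD.
by field; rewrite fact_neq0 !poch_neq0.
Qed.

Lemma natr_bin n k : (k <= n)%N ->
  'C(n, k)%:R = n`!%:R / (k`!%:R * (n - k)`!%:R) :> R.
Proof.
move=> hkn; rewrite -(bin_fact hkn) !natrM.
by field; rewrite !fact_neq0.
Qed.

Definition egf n (f : nat -> R) : {poly R} := \poly_(i < n.+1) (f i / i`!%:R).

Lemma coef_egfM3 n (f g h : nat -> R) :
  (egf n f * egf n g * egf n h)`_n =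
  \sum_(k < n.+1) \sum_(i < k.+1)
    f i / i`!%:R * (g (k - i)%N / (k - i)`!%:R) * (h (n - k)%N / (n - k)`!%:R).
Proof.
rewrite coefM; apply: eq_bigr => k _; rewrite coefM mulr_suml.
apply: eq_bigr => i _; have := ltn_ord k; have := ltn_ord i.
by rewrite !coef_poly => ? ?; rewrite !ifT //; lia.
Qed.

Definition tail_poch n (x : R) (i : nat) : R := poch (x + i%:R) (n - i).

Definition Tsym n (c d e : R) : R :=
  n`!%:R * (egf n (tail_poch n c) * egf n (tail_poch n d) * egf n (tail_poch n e))`_n.

Lemma Tsym_swap12 n (c d e : R) : Tsym n c d e = Tsym n d c e.
Proof. by rewrite /Tsym (mulrC (egf n _)). Qed.

Lemma Tsym_swap23 n (c d e : R) : Tsym n c d e = Tsym n c e d.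
Proof. by rewrite /Tsym mulrAC. Qed.

Lemma Tsum_Tsym n (c d e : R) : Tsum n c d e = Tsym n c d e.
Proof.
rewrite /Tsym coef_egfM3 mulr_sumr; apply: eq_bigr => k _.
rewrite poch_vandermonde_rev !mulr_sumr !mulr_suml; apply: eq_bigr => i _.
have hkn : (k <= n)%N by rewrite -ltnS.
have hik : (i <= k)%N by rewrite -ltnS.
rewrite /tail_poch.
have -> : (n - i = (k - i) + (n - k))%N by lia.
have -> : (n - (k - i) = i + (n - k))%N by lia.
have -> : (n - (n - k) = k)%N by lia.
rewrite !pochD -!addrA -!natrD subnKC // subnK // !natr_bin //.
by field; rewrite !fact_neq0.
Qed.

End SymmetricForm.

Definition Tsym_arg (R : numFieldType) (p q r : R) : R := (1 + p + q - 3 * r) / 2.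

Lemma Tsym_argC (R : numFieldType) (p q r : R) : Tsym_arg p q r = Tsym_arg q p r.
Proof. by rewrite /Tsym_arg [1 + p + _]addrAC. Qed.

Lemma U_Tsym (R : numFieldType) n (x y z : R) : U_admissible n x y z ->
  U n x y z = Tsym n (Tsym_arg x y z) (Tsym_arg x z y) (Tsym_arg y z x).
Proof.
rewrite /U_admissible /U /Tt /Uparams /= => -[ha hd hc].
rewrite T_Tsum // Tsum_Tsym.
have two_neq0 : (2 : R) != 0 by rewrite pnatr_eq0.
by congr Tsym; rewrite /Tsym_arg; field.
Qed.

Theorem theorem3p2 (R : numFieldType) (n : nat) (x y z : R) :
  (* symmetry of U_n, wherever all the 4F3's involved are defined *)
  (U_admissible n x y z -> U_admissible n x z y -> U_admissible n y x z ->
   U_admissible n y z x -> U_admissible n z x y -> U_admissible n z y x ->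
   [/\ U n x y z = U n x z y, U n x y z = U n y x z, U n x y z = U n y z x,
       U n x y z = U n z x y & U n x y z = U n z y x]) /\
  (* correspondence: with (a,b,c) = Uparams n x y z, i.e. U n x y z = T_n(a,b,c),
     the permuted value U_n(sigma(x,y,z)) is T_n at the transformed parameters *)
  (let p := Uparams n x y z in
   [/\ U n x y z = Tt n (phi1 n p), U n x z y = Tt n (phi2 n p),
       U n y x z = Tt n (phi3 n p) & U n y z x = Tt n (phi4 n p)] /\
   (U n z x y = Tt n (phi5 n p) /\ U n z y x = Tt n (phi6 n p))).
Proof.
split.
  move=> ? ? ? ? ? ?; rewrite !U_Tsym //.
  rewrite [Tsym_arg z y x]Tsym_argC [Tsym_arg y x z]Tsym_argC [Tsym_arg z x y]Tsym_argC.
  split.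
  - exact: Tsym_swap12.
  - exact: Tsym_swap23.
  - by rewrite Tsym_swap23 Tsym_swap12.
  - by rewrite Tsym_swap12 Tsym_swap23.
  - by rewrite Tsym_swap12 Tsym_swap23 Tsym_swap12.
have two_neq0 : (2 : R) != 0 by rewrite pnatr_eq0.
by rewrite /U /Tt /Uparams /=; split; [split|split]; congr T; field.
Qed.
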